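(* Let $p\ge1$ be an integer, let $\lambda$ be a random variable with the beta distribution $\mathrm{Beta}(1,p)$, i.e. with density $p(1-t)^{p-1}$ on $[0,1]$, and let $Z$ be a random variable whose conditional distribution given $\lambda=t$ is Poisson with mean $t$ (so $Z$ has the beta-Poisson distribution). Then for every integer $n\ge0$ and every real $x$, $$\mathcal{B}_{n,p}(x)=\mathbb{E}\big[(x+Z)^n\big].$$
   Context: For an integer $p\ge0$, the $p$-Bell numbers $\mathcal{B}_{n,p}$ are defined by $\sum_{n\ge0}\mathcal{B}_{n,p}\frac{z^n}{n!}=\sum_{n\ge0}\binom{n+p}{p}^{-1}\frac{(e^z-1)^n}{n!}$, and the $p$-Bell polynomials by $\mathcal{B}_{n,p}(x)=\sum_{k=0}^n\binom nk\mathcal{B}_{k,p}x^{n-k}$. *)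

From HB Require Import structures.
From mathcomp Require Import all_boot all_order all_algebra.
From mathcomp Require Import all_classical all_reals all_analysis.
Set Implicit Arguments. Unset Strict Implicit. Unset Printing Implicit Defensive.
Import Order.TTheory GRing.Theory Num.Theory.
Local Open Scope ring_scope.

Section FPS.
Variable R : realType.

Definition fps_mul (f g : nat -> R) : nat -> R :=
  fun n => \sum_(i < n.+1) f i * g (n - i)%N.

Definition fps_one : nat -> R := fun n => if n == 0%N then 1 else 0.

Definition fps_exp (f : nat -> R) (k : nat) : nat -> R := iter k (fps_mul f) fps_one.

Definition expm1_fps : nat -> R :=
  fun m => if m == 0%N then 0 else (m`!%:R)^-1.

(* p-Bell numbers: B_{n,p} = n! [z^n] sum_{k>=0} binom(k+p,p)^{-1} (e^z-1)^k / k!.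
   Since (e^z-1)^k has no coefficient below z^k, only k <= n contribute to [z^n]. *)
Definition pBell (p n : nat) : R :=
  n`!%:R * \sum_(k < n.+1)
     ('C(k + p, p)%:R)^-1 * (fps_exp expm1_fps k n / (k`!)%:R).

Definition pBell_poly (p n : nat) (x : R) : R :=
  \sum_(k < n.+1) 'C(n, k)%:R * pBell p k * x ^+ (n - k).

Definition beta1p_density (p : nat) (t : R) : R :=
  if (0 <= t) && (t <= 1) then p%:R * (1 - t) ^+ p.-1 else 0.

Definition poisson_mass (t : R) (k : nat) : R :=
  expR (- t) * t ^+ k / (k`!)%:R.

End FPS.

(* Expand [(x + k)^n] in the Newton basis of binomial coefficients ['C(k, j)]:
   comparing [z^m] in [e^{kz} = (1 + (e^z - 1))^k] gives
   [k^m = m! sum_j 'C(k, j) [z^m](e^z - 1)^j], hence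
   [(x + k)^n = sum_j c_j 'C(k, j)] with [c_j] independent of [k].  By linearity
   it remains to compute the factorial moments [E['C(Z, j)]].  Given [lambda = t]
   this is [t^j / j!] (Poisson), and integrating against the Beta(1,p) density
   gives [p B(j+1, p) / j! = 1 / (j! 'C(j + p, p))], which are exactly the weights
   with which the same [c_j] assemble [B_{n,p}(x)] from the series defining the
   p-Bell numbers. *)
From HB Require Import structures.
From mathcomp Require Import all_boot all_order all_algebra.
From mathcomp Require Import all_classical all_reals all_analysis.
From mathcomp Require Import measurable_realfun beta_distribution.
From mathcomp Require Import zify ring.
Import Order.TTheory GRing.Theory Num.Theory.
Import numFieldTopology.Exports.
Local Open Scope classical_set_scope.
Local Open Scope ring_scope.

Lemma natr_fact_neq0 (R : numDomainType) n : n`!%:R != 0 :> R.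
Proof. by rewrite pnatr_eq0 -lt0n fact_gt0. Qed.

Lemma natr_bin_neq0 (R : numDomainType) n m : (m <= n)%N -> 'C(n, m)%:R != 0 :> R.
Proof. by move=> le_mn; rewrite pnatr_eq0 -lt0n bin_gt0. Qed.

Lemma sumr_ord_widen (V : nmodType) (F : nat -> V) m n : (m <= n)%N ->
  (forall j, (m <= j)%N -> F j = 0) -> \sum_(j < m) F j = \sum_(j < n) F j.
Proof.
move=> le_mn F0; rewrite (big_ord_widen _ _ le_mn).
rewrite [RHS](bigID (fun j : 'I_n => j < m)%N) /=.
by rewrite [X in _ = _ + X]big1 ?addr0 // => j; rewrite -leqNgt => /F0.
Qed.

Lemma coef_exp_trunc_pow (R : numFieldType) (k m N : nat) : (m < N)%N ->
  ((\poly_(i < N) (i`!%:R)^-1 : {poly R}) ^+ k)`_m = k%:R ^+ m / m`!%:R.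
Proof.
elim: k m => [|k IH] m ltmN.
  by rewrite expr0 coef1 expr0n; case: m ltmN => [|m] _; rewrite ?fact0 ?divr1 ?mul0r.
rewrite exprS coefM -natr1 exprDn mulr_suml; apply: eq_bigr => -[i /= lti] _.
have le_im : (i <= m)%N by rewrite -ltnS.
rewrite coef_poly (leq_ltn_trans le_im ltmN) IH; last first.
  exact: leq_ltn_trans (leq_subr _ _) ltmN.
rewrite expr1n mulr1 -(bin_fact le_im) !natrM -mulr_natr.
by field; rewrite !natr_fact_neq0 natr_bin_neq0.
Qed.

Section newton_expansion.
Variable R : realType.
Local Notation e := (fps_exp (expm1_fps R)).

Lemma fps_exp_coef_poly (f : nat -> R) k n N : (n < N)%N ->
  fps_exp f k n = ((\poly_(i < N) f i) ^+ k)`_n.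
Proof.
elim: k n => [|k IH] n ltnN.
  by rewrite expr0 coef1 /fps_exp /= /fps_one; case: (n == 0%N).
rewrite exprS coefM /fps_exp /= -/(fps_exp f k); apply: eq_bigr => i _.
have ltiN : (i < N)%N by apply: leq_ltn_trans ltnN; rewrite -ltnS.
by rewrite coef_poly ltiN IH //; apply: leq_ltn_trans ltnN; exact: leq_subr.
Qed.

Lemma fps_exp_expm1_small j m : (m < j)%N -> e j m = 0.
Proof.
elim: j m => [//|j IH] m ltmj.
rewrite /fps_exp /= -/(e j) /fps_mul big1 // => -[[|i] /= lti] _.
  by rewrite /expm1_fps mul0r.
by rewrite IH ?mulr0 //; lia.
Qed.

Lemma natrX_binomial_expm1 k m :
  k%:R ^+ m = m`!%:R * \sum_(j < m.+1) 'C(k, j)%:R * e j m.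
Proof.
set E := \poly_(i < m.+1) expm1_fps R i.
have exp_trunc : \poly_(i < m.+1) (i`!%:R)^-1 = E + 1.
  apply/polyP => i; rewrite coefD coef1 !coef_poly /expm1_fps.
  by case: ifP => ltim; case: i ltim => [|i] ltim //=; rewrite ?fact0 ?invr1 ?add0r ?addr0.
apply: (@mulIf _ (m`!%:R)^-1); first by rewrite invr_eq0 natr_fact_neq0.
rewrite -(@coef_exp_trunc_pow _ k _ _ (ltnSn m)) exp_trunc exprD1n coef_sum.
rewrite mulrC mulrA mulVf ?natr_fact_neq0 // mul1r.
rewrite (@sumr_ord_widen _ (fun j => 'C(k, j)%:R * e j m) _ (k + m).+1); last 2 first.
- by rewrite ltnS leq_addl.
- by move=> j /fps_exp_expm1_small ->; rewrite mulr0.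
rewrite (@sumr_ord_widen _ (fun j => (E ^+ j *+ 'C(k, j))`_m) _ (k + m).+1); last 2 first.
- by rewrite ltnS leq_addr.
- by move=> j /bin_small ->; rewrite coef0.
by apply: eq_bigr => j _; rewrite coefMn -fps_exp_coef_poly // mulr_natl.
Qed.

(* [m! [z^m] (e^z - 1)^j] is [j!] times a Stirling number of the second kind. *)
Definition newton_coef n (x : R) j : R :=
  \sum_(m < n.+1) 'C(n, m)%:R * x ^+ (n - m) * m`!%:R * e j m.

Lemma exprD_newton n (x : R) k :
  (x + k%:R) ^+ n = \sum_(j < n.+1) newton_coef n x j * 'C(k, j)%:R.
Proof.
rewrite exprDn; transitivity (\sum_(i < n.+1) \sum_(j < n.+1)
    'C(n, i)%:R * x ^+ (n - i) * i`!%:R * e j i * 'C(k, j)%:R).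
  apply: eq_bigr => -[i /= lti] _; rewrite -mulr_natl natrX_binomial_expm1.
  rewrite (@sumr_ord_widen _ (fun j => 'C(k, j)%:R * e j i) _ _ lti); last first.
    by move=> j /fps_exp_expm1_small ->; rewrite mulr0.
  by rewrite !mulr_sumr; apply: eq_bigr => j _; ring.
by rewrite exchange_big; apply: eq_bigr => j _; rewrite /newton_coef mulr_suml.
Qed.

Lemma pBell_poly_newton p n (x : R) :
  pBell_poly p n x = \sum_(j < n.+1) newton_coef n x j * ('C(j + p, p)%:R^-1 / j`!%:R).
Proof.
under [RHS]eq_bigr do rewrite /newton_coef mulr_suml.
rewrite exchange_big /=; apply: eq_bigr => -[m /= ltm] _.
rewrite /pBell (@sumr_ord_widen _ (fun j => 'C(j + p, p)%:R^-1 * (e j m / j`!%:R)) _ _ ltm);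
  last first.
  by move=> j /fps_exp_expm1_small ->; rewrite mul0r mulr0.
by rewrite [LHS]mulrC !mulr_sumr; apply: eq_bigr => j _; ring.
Qed.

End newton_expansion.

Section nat_valued_function.
Context {d} {T : measurableType d} {R : realType} (mu : {measure set T -> \bar R}).
Context {Z : T -> nat}.
Hypothesis mZ : forall k, measurable (Z @^-1` [set k]).

Lemma measurable_comp_natfun (h : nat -> R) : measurable_fun setT (h \o Z).
Proof.
move=> _ B mB; rewrite setTI.
have -> : (h \o Z) @^-1` B = \bigcup_(k in [set k | B (h k)]) Z @^-1` [set k].
  by apply/seteqP; split => [w Bw|w [k Bk /= Zwk]] /=; [exists (Z w)|rewrite Zwk].
by apply: bigcup_measurable => k _; exact: mZ.
Qed.

Local Open Scope ereal_scope.

Lemma ge0_integral_natfun (h : nat -> R) : (forall k, (0 <= h k)%R) ->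
  \int[mu]_w (h (Z w))%:E = \sum_(k <oo) (h k)%:E * mu (Z @^-1` [set k]).
Proof.
move=> h_ge0.
have partZ : \bigcup_k Z @^-1` [set k] = setT.
  by apply/seteqP; split => // w _; exists (Z w).
rewrite -partZ ge0_integral_bigcup //.
- apply: eq_eseriesr => k _; rewrite -integral_cst //.
  by apply: eq_integral => w; rewrite inE => /= ->.
- by rewrite partZ; exact/measurable_EFinP/measurable_comp_natfun.
- by move=> w _; rewrite lee_fin.
- exact: trivIset_preimage1.
Qed.

End nat_valued_function.

Section poisson_mass.
Variable R : realType.
Local Open Scope ereal_scope.

Lemma eseries_expR (t : R) : \sum_(k <oo) (t ^+ k / k`!%:R)%:E = (expR t)%:E.
Proof.
rewrite /expR -EFin_lim; last exact: is_cvg_series_exp_coeff.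
by apply: congr_lim; apply/funext => n /=; rewrite /series /= sumEFin.
Qed.

Lemma poisson_mass_ge0 (t : R) k : (0 <= t)%R -> (0 <= poisson_mass t k)%R.
Proof. by move=> t_ge0; rewrite divr_ge0 ?mulr_ge0 ?exprn_ge0 ?expR_ge0. Qed.

Lemma measurable_poisson_mass k : measurable_fun setT (@poisson_mass R ^~ k).
Proof.
apply: measurable_funM; last exact: measurable_cst.
apply: measurable_funM; last exact: exprn_measurable.
by apply: measurableT_comp; [exact: measurable_expR|exact: oppr_measurable].
Qed.

Lemma poisson_binomial_moment (t : R) j : (0 <= t)%R ->
  \sum_(k <oo) ('C(k, j)%:R * poisson_mass t k)%:E = (t ^+ j / j`!%:R)%:E.
Proof.
move=> t_ge0.
have term_ge0 k : 0 <= ('C(k, j)%:R * poisson_mass t k)%:E.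
  by rewrite lee_fin mulr_ge0 ?poisson_mass_ge0.
rewrite (nneseries_split 0 j) // big_nat_cond big1 ?add0e; last first.
  by move=> k /andP[/andP[_ ltkj] _]; rewrite bin_small ?mul0r.
rewrite add0n -nneseries_addn //.
under eq_eseriesr => k _.
  have binE := bin_fact (leq_addl k j); rewrite addnK in binE.
  have -> : ('C(k + j, j)%:R * poisson_mass t (k + j) =
      (t ^+ j / j`!%:R * expR (- t)) * (t ^+ k / k`!%:R))%R.
    rewrite /poisson_mass -binE !natrM exprD.
    by field; rewrite !natr_fact_neq0 natr_bin_neq0 ?leq_addl.
  rewrite EFinM.
  over.
rewrite nneseriesZl /=; last by move=> k _; rewrite lee_fin divr_ge0 ?exprn_ge0.
by rewrite eseries_expR -EFinM -!mulrA expRN mulVf ?mulr1 // gt_eqF ?expR_gt0.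
Qed.

End poisson_mass.

Section beta1p_density.
Variable R : realType.
Local Notation mu := (@lebesgue_measure R).
Local Notation XMonemX := (@XMonemX R).

Lemma beta1p_densityE p (t : R) :
  beta1p_density p t = p%:R * (XMonemX 0 p.-1 \_ `[0, 1]) t.
Proof.
rewrite patchE /beta1p_density /XMonemX expr0 mul1r /= mem_setE in_itv /=.
by case: ifP; rewrite ?mulr0.
Qed.

Lemma measurable_beta1p_density p : measurable_fun setT (@beta1p_density R p).
Proof.
have -> : @beta1p_density R p = fun t => p%:R * (XMonemX 0 p.-1 \_ `[0, 1]) t.
  by apply/funext => t; exact: beta1p_densityE.
apply: measurable_funM; first exact: measurable_cst.
by apply/(measurable_restrictT _ _).1 => //; exact: measurable_XMonemX.
Qed.

Lemma beta1p_densityM_ge0 p (g : R -> R) t :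
  (forall t, 0 <= t -> 0 <= g t) -> 0 <= beta1p_density p t * g t.
Proof.
move=> g_ge0; rewrite /beta1p_density; case: ifP => [/andP[t_ge0 t_le1]|_].
  by rewrite !mulr_ge0 ?exprn_ge0 ?subr_ge0 ?g_ge0.
by rewrite mul0r.
Qed.

Local Open Scope ereal_scope.

Lemma beta1p_moment p j :
  \int[mu]_t (beta1p_density p.+1 t * (t ^+ j / j`!%:R))%:E =
  ('C(j + p.+1, p.+1)%:R^-1 / j`!%:R)%:E.
Proof.
under eq_integral => t _.
  have -> : (beta1p_density p.+1 t * (t ^+ j / j`!%:R) =
      p.+1%:R / j`!%:R * (XMonemX j p \_ `[0, 1]) t)%R.
    rewrite beta1p_densityE !patchE; case: ifP => _; last by rewrite !mulr0 mul0r.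
    by rewrite /XMonemX expr0 mul1r; field; rewrite natr_fact_neq0.
  rewrite EFinM.
  over.
rewrite /= ge0_integralZl_EFin ?divr_ge0 //; first last.
- by apply/measurable_EFinP/(measurable_restrictT _ _).1 => //; exact: measurable_XMonemX.
- move=> t _; rewrite lee_fin patchE; case: ifP => // t01.
  by apply: XMonemX_ge0; move: t01; rewrite /= mem_setE.
rewrite -(EFin_beta_fun j.+1 p.+1) beta_fun_fact -EFinM; congr EFin.
have binE := bin_fact (leq_addl j p.+1); rewrite addnK in binE.
rewrite -addnS -binE factS !natrM.
by field; rewrite !natr_fact_neq0 natr_bin_neq0 ?leq_addl //= addrC natr1 pnatr_eq0.
Qed.

Lemma beta1p_poisson_binomial_series p j (t : R) :
  \sum_(k <oo) ('C(k, j)%:R * (beta1p_density p t * poisson_mass t k))%:E =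
  (beta1p_density p t * (t ^+ j / j`!%:R))%:E.
Proof.
have [t_ge0|t_lt0] := boolP (0 <= t)%R.
  under eq_eseriesr do rewrite mulrCA EFinM.
  rewrite nneseriesZl ?poisson_binomial_moment -?EFinM //.
  by move=> k _; rewrite lee_fin mulr_ge0 ?poisson_mass_ge0.
rewrite /beta1p_density (negbTE t_lt0) /= mul0r.
by apply: eseries0 => k _ _; rewrite mul0r mulr0.
Qed.

End beta1p_density.

Section beta_poisson.
Context {R : realType} {d} {T : measurableType d} {P : probability T R}.
Context {lam : T -> R} {Z : T -> nat} {p : nat}.
Hypothesis mZ : forall k, measurable (Z @^-1` [set k]).
Hypothesis lamZ_law : forall (A : set R) (k : nat), measurable A ->
  P (lam @^-1` A `&` Z @^-1` [set k]) =
  (\int[lebesgue_measure]_(t in A) (beta1p_density p.+1 t * poisson_mass t k)%:E)%E.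
Local Notation mu := (@lebesgue_measure R).
Local Open Scope ereal_scope.

Lemma beta_poisson_binomial_moment j :
  \int[P]_w ('C(Z w, j)%:R)%:E = ('C(j + p.+1, p.+1)%:R^-1 / j`!%:R)%:E.
Proof.
have dens_ge0 k (t : R) : (0 <= beta1p_density p.+1 t * poisson_mass t k)%R.
  apply: (@beta1p_densityM_ge0 _ _ (fun s => poisson_mass s k)) => s.
  exact: poisson_mass_ge0.
have mdens k : measurable_fun setT
    (fun t : R => (beta1p_density p.+1 t * poisson_mass t k)%:E).
  apply/measurable_EFinP/measurable_funM; first exact: measurable_beta1p_density.
  exact: measurable_poisson_mass.
rewrite (ge0_integral_natfun P mZ (fun k => 'C(k, j)%:R)) //.
transitivity (\sum_(k <oo) \int[mu]_t
    ('C(k, j)%:R * (beta1p_density p.+1 t * poisson_mass t k))%:E).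
  apply: eq_eseriesr => k _.
  under [RHS]eq_integral do rewrite EFinM.
  rewrite ge0_integralZl_EFin //; [|by move=> t _; rewrite lee_fin dens_ge0|exact: mdens].
  (* [P] appears under two different coercions here, so [lamZ_law] is used up to conversion. *)
  by congr (_ * _); have := lamZ_law setT k measurableT; rewrite preimage_setT setTI.
rewrite -integral_nneseries //; last 2 first.
- move=> k; apply/measurable_EFinP/measurable_funM; first exact: measurable_cst.
  by apply/measurable_EFinP; exact: mdens.
- by move=> k t _; rewrite lee_fin mulr_ge0.
rewrite -beta1p_moment; apply: eq_integral => t _.
exact: beta1p_poisson_binomial_series.
Qed.

Lemma beta_poisson_integrable_binomial j :
  P.-integrable setT (fun w => ('C(Z w, j)%:R)%:E).
Proof.
apply/integrableP; split.
  exact/measurable_EFinP/(measurable_comp_natfun mZ (fun k => 'C(k, j)%:R)).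
under eq_integral do rewrite gee0_abs ?lee_fin //.
by rewrite beta_poisson_binomial_moment ltry.
Qed.

Lemma beta_poisson_integral_binomial_sum n (c : nat -> R) :
  \int[P]_w (\sum_(j < n) c j * 'C(Z w, j)%:R)%:E =
  (\sum_(j < n) c j * ('C(j + p.+1, p.+1)%:R^-1 / j`!%:R))%:E.
Proof.
under eq_integral do rewrite -sumEFin; under eq_integral do under eq_bigr do rewrite EFinM.
rewrite integral_sum //; last first.
  by move=> j; apply: integrableZl => //; exact: beta_poisson_integrable_binomial.
rewrite -sumEFin; apply: eq_bigr => j _.
rewrite integralZl //; last exact: beta_poisson_integrable_binomial.
by rewrite EFinM; congr (_ * _); exact: beta_poisson_binomial_moment.
Qed.

End beta_poisson.

Theorem mainTheorem16 (R : realType) (d : measure_display) (T : measurableType d)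
  (P : probability T R) (p : nat) (lam : {RV P >-> R}) (Z : T -> nat) :
  (1 <= p)%N ->
  (* Z is a (measurable) integer-valued random variable *)
  (forall k : nat, measurable (Z @^-1` [set k])) ->
  (* lambda ~ Beta(1,p) *)
  (forall A : set R, measurable A ->
     P (lam @^-1` A) = (\int[lebesgue_measure]_(t in A) (beta1p_density p t)%:E)%E) ->
  (* Z | lambda = t ~ Poisson(t): joint law of (lambda, Z) *)
  (forall (A : set R) (k : nat), measurable A ->
     P (lam @^-1` A `&` Z @^-1` [set k]) =
       (\int[lebesgue_measure]_(t in A) (beta1p_density p t * poisson_mass t k)%:E)%E) ->
  forall (n : nat) (x : R),
    ('E_P[fun w => ((x + (Z w)%:R) ^+ n)%R] = (pBell_poly p n x)%:E)%E.
Proof.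
case: p => [//|p] _ mZ _ lamZ_law n x.
rewrite unlock; under eq_integral do rewrite exprD_newton.
by rewrite (beta_poisson_integral_binomial_sum mZ lamZ_law) pBell_poly_newton.
Qed.
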